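(* Let $d\ge 2$, $2\le k\le d+1$, and let $y_1,\dots,y_N\in\{1,\dots,k\}$ be labels (the dataset may be class-balanced or class-imbalanced). Let $s>0$ and, for each $i$, let $\alpha_{i1}\ge\frac12$, $\alpha_{i2}\le\alpha_{i1}$, $\beta_{i1},\beta_{i2}\in\mathbb R$. For $\boldsymbol w_1,\dots,\boldsymbol w_k,\boldsymbol z_1,\dots,\boldsymbol z_N\in\mathbb S^{d-1}$ define the GM-Softmax empirical risk $$L=\frac1N\sum_{i=1}^N-\log\frac{\exp(s(\alpha_{i1}\boldsymbol w_{y_i}^{\mathrm T}\boldsymbol z_i+\beta_{i1}))}{\exp(s(\alpha_{i2}\boldsymbol w_{y_i}^{\mathrm T}\boldsymbol z_i+\beta_{i2}))+\sum_{j\ne y_i}\exp(s\boldsymbol w_j^{\mathrm T}\boldsymbol z_i)}.$$ Then for all such configurations satisfying $\sum_{j=1}^k\boldsymbol w_j=0$, $$L\ge\frac1N\sum_{i=1}^N\log\Big[\exp\big(s(\alpha_{i2}-\alpha_{i1}+\beta_{i2}-\beta_{i1})\big)+(k-1)\exp\big(-s(\tfrac1{k-1}+\alpha_{i1}+\beta_{i1})\big)\Big],$$ with equality if and only if $\boldsymbol w_i^{\mathrm T}\boldsymbol w_j=-\frac1{k-1}$ for all $i\ne j$ and $\boldsymbol z_i=\boldsymbol w_{y_i}$ for all $i$. Consequently the minimizers of $L$ subject to $\sum_j\boldsymbol w_j=0$ have the largest possible class margin $\arccos\frac{-1}{k-1}$ and the largest possible minimal sample margin $\frac{k}{k-1}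$.
   Context: $\mathbb S^{d-1}$ is the unit sphere in $\mathbb R^d$. Class margin: $m_c(\{\boldsymbol w_i\})=\arccos\big[\max_{i\ne j}\boldsymbol w_i^{\mathrm T}\boldsymbol w_j\big]$ for unit prototypes. Minimal sample margin: $\gamma_{\min}=\min_i\big(\boldsymbol w_{y_i}^{\mathrm T}\boldsymbol z_i-\max_{j\ne y_i}\boldsymbol w_j^{\mathrm T}\boldsymbol z_i\big)$. *)

From HB Require Import structures.
From mathcomp Require Import all_boot all_order all_algebra.
From mathcomp Require Import all_classical all_reals all_analysis.
Set Implicit Arguments. Unset Strict Implicit. Unset Printing Implicit Defensive.
Import Order.TTheory GRing.Theory Num.Theory.
Local Open Scope classical_set_scope.
Local Open Scope ring_scope.

Section Defs.
Variables (R : realType) (d k N : nat).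

Definition dotv (u v : 'rV[R]_d) : R := \sum_(t < d) u ord0 t * v ord0 t.

Definition on_sphere (u : 'rV[R]_d) : Prop := dotv u u = 1.

Definition GM_loss (s : R) (a1 a2 b1 b2 : 'I_N -> R) (y : 'I_N -> 'I_k)
    (W : 'I_k -> 'rV[R]_d) (Z : 'I_N -> 'rV[R]_d) : R :=
  (N%:R)^-1 * \sum_(i < N)
    - ln (expR (s * (a1 i * dotv (W (y i)) (Z i) + b1 i)) /
          (expR (s * (a2 i * dotv (W (y i)) (Z i) + b2 i)) +
           \sum_(j < k | j != y i) expR (s * dotv (W j) (Z i)))).

Definition GM_bound (s : R) (a1 a2 b1 b2 : 'I_N -> R) : R :=
  (N%:R)^-1 * \sum_(i < N)
    ln (expR (s * (a2 i - a1 i + b2 i - b1 i)) +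
        (k.-1)%:R * expR (- (s * (((k.-1)%:R)^-1 + a1 i + b1 i)))).

Definition class_margin (W : 'I_k -> 'rV[R]_d) : R :=
  acos (sup [set dotv (W p.1) (W p.2) | p in [set p : 'I_k * 'I_k | p.1 != p.2]]).

Definition sample_margin (y : 'I_N -> 'I_k) (W : 'I_k -> 'rV[R]_d)
    (Z : 'I_N -> 'rV[R]_d) (i : 'I_N) : R :=
  dotv (W (y i)) (Z i) - sup [set dotv (W j) (Z i) | j in [set j | j != y i]].

Definition min_sample_margin (y : 'I_N -> 'I_k) (W : 'I_k -> 'rV[R]_d)
    (Z : 'I_N -> 'rV[R]_d) : R :=
  inf [set sample_margin y W Z i | i in [set: 'I_N]].

Definition feasible (W : 'I_k -> 'rV[R]_d) (Z : 'I_N -> 'rV[R]_d) : Prop :=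
  (forall j, on_sphere (W j)) /\ (forall i, on_sphere (Z i)) /\
  \sum_(j < k) W j = 0.

End Defs.

(* Since the prototypes sum to zero, the logits w_j^T z_i of the k - 1 wrong classes
   average to -u/(k-1), where u = w_{y_i}^T z_i <= 1, and by convexity of exp (the
   tangent line at the mean) the softmax denominator is smallest when they are all equal.
   What remains is nonincreasing in u because alpha_i2 <= alpha_i1 and
   alpha_i1 + 1/(k-1) > 0, so each sample's loss is bounded by its value at u = 1, with
   equality exactly when z_i = w_{y_i} and w_j^T w_{y_i} = -1/(k-1) for all j <> y_i.
   Since k <= d + 1 a regular simplex fits in R^d and attains the bound, so the
   minimizers are exactly the simplex configurations.  The margin bounds hold for all
   unit configurations: 0 <= |sum_j w_j|^2 forces max_{i<>j} w_i^T w_j >= -1/(k-1), and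
   averaging the sample margins of one sample per class gives gamma_min <= k/(k-1). *)

From HB Require Import structures.
From mathcomp Require Import all_boot all_order all_algebra.
From mathcomp Require Import all_classical all_reals all_analysis.
From mathcomp Require Import ring lra.
Import Order.TTheory GRing.Theory Num.Theory.
Local Open Scope classical_set_scope.
Local Open Scope ring_scope.
Set Implicit Arguments.
Unset Strict Implicit.

Section InnerProduct.
Variables (R : realType) (d : nat).
Implicit Types u v w : 'rV[R]_d.

Lemma dotvC u v : dotv u v = dotv v u.
Proof. by apply: eq_bigr => t _; rewrite mulrC. Qed.

Lemma dotvDl u v w : dotv (u + v) w = dotv u w + dotv v w.
Proof. by rewrite /dotv -big_split; apply: eq_bigr => t _; rewrite mxE mulrDl. Qed.

Lemma dotvZl a u w : dotv (a *: u) w = a * dotv u w.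
Proof. by rewrite /dotv mulr_sumr; apply: eq_bigr => t _; rewrite mxE mulrA. Qed.

Lemma dotvNl u w : dotv (- u) w = - dotv u w.
Proof. by rewrite -scaleN1r dotvZl mulN1r. Qed.

Lemma dotvBl u v w : dotv (u - v) w = dotv u w - dotv v w.
Proof. by rewrite dotvDl dotvNl. Qed.

Lemma dotvDr u v w : dotv w (u + v) = dotv w u + dotv w v.
Proof. by rewrite dotvC dotvDl !(dotvC w). Qed.

Lemma dotvZr a u w : dotv w (a *: u) = a * dotv w u.
Proof. by rewrite dotvC dotvZl dotvC. Qed.

Lemma dotvNr u w : dotv w (- u) = - dotv w u.
Proof. by rewrite dotvC dotvNl dotvC. Qed.

Lemma dotvBr u v w : dotv w (u - v) = dotv w u - dotv w v.
Proof. by rewrite dotvC dotvBl !(dotvC w). Qed.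

Lemma dotv0l w : dotv 0 w = 0.
Proof. by rewrite /dotv big1 // => t _; rewrite mxE mul0r. Qed.

Lemma dotv_suml (I : finType) (P : pred I) (F : I -> 'rV[R]_d) w :
  dotv (\sum_(i | P i) F i) w = \sum_(i | P i) dotv (F i) w.
Proof.
apply: (big_ind2 (fun a b => dotv a w = b)) => [|a b c e <- <-|//].
  exact: dotv0l.
by rewrite dotvDl.
Qed.

Lemma dotv_sumr (I : finType) (P : pred I) (F : I -> 'rV[R]_d) w :
  dotv w (\sum_(i | P i) F i) = \sum_(i | P i) dotv w (F i).
Proof. by rewrite dotvC dotv_suml; apply: eq_bigr => i _; rewrite dotvC. Qed.

Lemma dotvv_ge0 u : 0 <= dotv u u.
Proof. by apply: sumr_ge0 => t _; rewrite -expr2 sqr_ge0. Qed.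

Lemma dotvv_eq0 u : dotv u u = 0 -> u = 0.
Proof.
move=> /eqP; rewrite psumr_eq0 => [/allP u0|t _]; last by rewrite -expr2 sqr_ge0.
apply/rowP => t; have /(_ (mem_index_enum t)) := u0 t.
by rewrite -expr2 sqrf_eq0 mxE => /eqP.
Qed.

Lemma dotvBB u v : dotv (u - v) (u - v) = dotv u u - 2 * dotv u v + dotv v v.
Proof. by rewrite !(dotvBl, dotvBr) (dotvC v u); ring. Qed.

Lemma mulr2_dotv_le u v : 2 * dotv u v <= dotv u u + dotv v v.
Proof. by have := dotvv_ge0 (u - v); rewrite dotvBB; lra. Qed.

Lemma sphere_dotv_le1 u v : on_sphere u -> on_sphere v -> dotv u v <= 1.
Proof. by move=> u1 v1; have := mulr2_dotv_le u v; rewrite u1 v1; lra. Qed.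

Lemma sphere_dotv_eq1 u v : on_sphere u -> on_sphere v -> dotv u v = 1 -> u = v.
Proof.
move=> u1 v1 uv1; apply/eqP; rewrite -subr_eq0; apply/eqP/dotvv_eq0.
by rewrite dotvBB u1 v1 uv1; ring.
Qed.

Lemma sum_dotv_others (I : finType) (F : I -> 'rV[R]_d) (c : I) w :
  \sum_i F i = 0 -> \sum_(i | i != c) dotv (F i) w = - dotv (F c) w.
Proof.
move=> F0; apply/eqP; rewrite -addr_eq0 addrC.
by have := dotv_suml predT F w; rewrite F0 dotv0l (bigD1 c) //= => <-.
Qed.

Lemma dotv_sum_self (I : finType) (F : I -> 'rV[R]_d) :
  dotv (\sum_i F i) (\sum_i F i) =
  \sum_i (dotv (F i) (F i) + \sum_(j | j != i) dotv (F j) (F i)).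
Proof. by rewrite dotv_suml; apply: eq_bigr => i _; rewrite dotvC dotv_suml (bigD1 i). Qed.

Lemma sum_dotv_centered (k : nat) (F : 'I_k -> 'rV[R]_d) :
  \sum_i dotv (k%:R *: F i - \sum_j F j) (k%:R *: F i - \sum_j F j) =
  k%:R ^+ 2 * \sum_i dotv (F i) (F i) - k%:R * dotv (\sum_j F j) (\sum_j F j).
Proof.
set S := \sum_j F j; have cross : \sum_i dotv (F i) S = dotv S S by rewrite dotv_suml.
under eq_bigr do rewrite dotvBB !(dotvZl, dotvZr) mulrA -expr2.
rewrite !big_split /= sumrN -!mulr_sumr cross sumr_const card_ord -[_ *+ _]mulr_natl.
by ring.
Qed.

End InnerProduct.

Lemma natr_pred_ge1 (R : numDomainType) (k : nat) : (2 <= k)%N -> 1 <= (k.-1)%:R :> R.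
Proof. by move=> k_ge2; rewrite ler1n -ltnS prednK // ltnW. Qed.

Section ExpMean.
Variable R : realType.

Lemma expR_tangent_le (m x : R) : expR m * (1 + (x - m)) <= expR x.
Proof.
rewrite -[in leRHS](subrK m x) expRD mulrC ler_wpM2r ?expR_ge0 //.
exact: expR_ge1Dx.
Qed.

Lemma expR_tangent_eq (m x : R) : expR m * (1 + (x - m)) = expR x -> x = m.
Proof.
rewrite -[in RHS](subrK m x) expRD mulrC => /(mulIf (lt0r_neq0 (expR_gt0 m))).
move=> tangent_eq; apply/eqP; rewrite -subr_eq0; apply/negPn/negP.
by move=> /expR_gt1Dx; rewrite -tangent_eq ltxx.
Qed.

Variables (I : finType) (P : pred I) (x : I -> R) (m : R).
Hypothesis sum_x : \sum_(j | P j) x j = #|P|%:R * m.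

Let gap_sum : \sum_(j | P j) (expR (x j) - expR m * (1 + (x j - m))) =
  \sum_(j | P j) expR (x j) - #|P|%:R * expR m.
Proof.
rewrite sumrB -mulr_sumr !big_split /= sumrN sum_x sumr_const -[_ *+ _]mulr_natl.
by rewrite sumr_const -[_ *+ #|_|]mulr_natl; ring.
Qed.

Lemma expR_mean_le : #|P|%:R * expR m <= \sum_(j | P j) expR (x j).
Proof.
rewrite -subr_ge0 -gap_sum; apply: sumr_ge0 => j _.
by rewrite subr_ge0 expR_tangent_le.
Qed.

Lemma expR_mean_eq : #|P|%:R * expR m = \sum_(j | P j) expR (x j) ->
  forall j, P j -> x j = m.
Proof.
move=> /eqP; rewrite eq_sym -subr_eq0 -gap_sum psumr_eq0 => [/allP gap0 j Pj|j _].
  apply: expR_tangent_eq; apply/eqP; rewrite eq_sym -subr_eq0.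
  by have := gap0 j (mem_index_enum j); rewrite Pj.
by rewrite subr_ge0 expR_tangent_le.
Qed.

End ExpMean.


Section SampleLoss.
Variables (R : realType) (k : nat) (c : 'I_k) (s a1 a2 b1 b2 : R).

(* The summand of [GM_loss] for a sample of label [c], with [u = w_c^T z] and
   [x j = w_j^T z]. *)
Definition sample_loss (u : R) (x : 'I_k -> R) : R :=
  - ln (expR (s * (a1 * u + b1)) /
        (expR (s * (a2 * u + b2)) + \sum_(j < k | j != c) expR (s * x j))).

Local Notation n := ((k.-1)%:R : R).

Definition sample_bound : R :=
  ln (expR (s * (a2 - a1 + b2 - b1)) + n * expR (- (s * (n^-1 + a1 + b1)))).

Hypothesis k_ge2 : (2 <= k)%N.

Let n_gt0 : 0 < n.
Proof. exact: lt_le_trans ltr01 (natr_pred_ge1 R k_ge2). Qed.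

Lemma sample_loss_simplex (x : 'I_k -> R) : (forall j, j != c -> x j = - n^-1) ->
  sample_loss 1 x = sample_bound.
Proof.
move=> x_simplex; rewrite /sample_loss /sample_bound.
rewrite (eq_bigr (fun=> expR (- (s / n)))) => [|j /x_simplex ->]; last by rewrite mulrN.
rewrite sumr_const cardC1 card_ord -[_ *+ _]mulr_natl.
rewrite -lnV ?posrE ?divr_gt0 ?addr_gt0 ?mulr_gt0 ?expR_gt0 //.
rewrite invf_div mulrDl -mulrA -expRN -!expRD.
by congr (ln (expR _ + _ * expR _)); field; rewrite ?lt0r_neq0.
Qed.

Hypotheses (s_gt0 : 0 < s) (a1_ge : 1 / 2 <= a1) (a2_le : a2 <= a1).
Variables (u : R) (x : 'I_k -> R).
Hypotheses (u_le1 : u <= 1) (sum_x : \sum_(j < k | j != c) x j = - u).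

Local Notation P := (s * (a1 * u + b1)).
Local Notation S := (\sum_(j < k | j != c) expR (s * x j)).
Local Notation m := (- u / n).

Let sum_sx : \sum_(j | predC1 c j) s * x j = #|predC1 c|%:R * (s * m).
Proof. by rewrite -mulr_sumr sum_x cardC1 card_ord; field; rewrite ?lt0r_neq0. Qed.

Let mean_le : n * expR (s * m) <= S.
Proof. by have := expR_mean_le sum_sx; rewrite cardC1 card_ord. Qed.

Let S_gt0 : 0 < S.
Proof. by apply: lt_le_trans mean_le; rewrite mulr_gt0 ?expR_gt0 //; lra. Qed.

Let loss_expand : sample_loss u x = ln (expR (s * (a2 * u + b2) - P) + S * expR (- P)).
Proof.
rewrite /sample_loss -lnV ?posrE ?divr_gt0 ?addr_gt0 ?expR_gt0 //.
by rewrite invf_div mulrDl -expRN -expRD.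
Qed.

Let head_ge : expR (s * (a2 - a1 + b2 - b1)) <= expR (s * (a2 * u + b2) - P).
Proof.
rewrite ler_expR -mulrBr ler_pM2l //.
have : 0 <= (a1 - a2) * (1 - u) by rewrite mulr_ge0 // subr_ge0.
lra.
Qed.

Let tail_exponent : s * m - P = - (s * (u * (n^-1 + a1) + b1)).
Proof. by field; rewrite ?lt0r_neq0. Qed.

Let coef_gt0 : 0 < n^-1 + a1.
Proof. by rewrite addr_gt0 ?invr_gt0 //; apply: lt_le_trans a1_ge. Qed.

Let tail_ge_mean :
  n * expR (- (s * (n^-1 + a1 + b1))) <= n * expR (s * m) * expR (- P).
Proof.
rewrite -mulrA -expRD ler_pM2l //.
rewrite ler_expR tail_exponent lerN2 ler_pM2l // lerD2r.
by rewrite -[leRHS]mul1r ler_pM2r.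
Qed.

Let mean_tail_le : n * expR (s * m) * expR (- P) <= S * expR (- P).
Proof. by rewrite ler_wpM2r ?expR_ge0. Qed.

Let tail_ge : n * expR (- (s * (n^-1 + a1 + b1))) <= S * expR (- P).
Proof. exact: le_trans tail_ge_mean mean_tail_le. Qed.

Lemma sample_bound_le_loss : sample_bound <= sample_loss u x.
Proof.
rewrite loss_expand ler_ln ?posrE ?addr_gt0 ?mulr_gt0 ?expR_gt0 //.
exact: lerD.
Qed.

Lemma sample_loss_eq_bound : sample_loss u x = sample_bound ->
  u = 1 /\ forall j, j != c -> x j = - n^-1.
Proof.
rewrite loss_expand => /ln_inj.
rewrite !posrE !addr_gt0 ?mulr_gt0 ?expR_gt0 // => /(_ isT isT) sum_eq.
have tail_mean_eq : n * expR (- (s * (n^-1 + a1 + b1))) = n * expR (s * m) * expR (- P).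
  by have := tail_ge_mean; have := mean_tail_le; have := head_ge; lra.
have mean_eq : n * expR (s * m) = S.
  apply: (mulIf (lt0r_neq0 (expR_gt0 (- P)))).
  by have := tail_ge_mean; have := mean_tail_le; have := head_ge; lra.
have u1 : u = 1.
  move: tail_mean_eq; rewrite -mulrA -expRD tail_exponent.
  move=> /(mulfI (lt0r_neq0 n_gt0))/expR_inj/oppr_inj.
  move=> /(mulfI (lt0r_neq0 s_gt0))/addIr coef_eq.
  by apply: (mulIf (lt0r_neq0 coef_gt0)); rewrite mul1r -coef_eq.
split=> // j /(expR_mean_eq sum_sx); rewrite cardC1 card_ord => /(_ mean_eq).
by move=> /(mulfI (lt0r_neq0 s_gt0)) ->; rewrite u1 mulNr mul1r.
Qed.

End SampleLoss.

Definition simplex_gram (R : realType) (d k : nat) (W : 'I_k -> 'rV[R]_d) : Prop :=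
  forall i j, i != j -> dotv (W i) (W j) = - ((k.-1)%:R)^-1.

Section EmpiricalRisk.
Variables (R : realType) (d k N : nat) (y : 'I_N -> 'I_k).
Variables (s : R) (a1 a2 b1 b2 : 'I_N -> R).
Hypotheses (k_ge2 : (2 <= k)%N) (s_gt0 : 0 < s).
Hypotheses (a1_ge : forall i, 1 / 2 <= a1 i) (a2_le : forall i, a2 i <= a1 i).
Variables (W : 'I_k -> 'rV[R]_d) (Z : 'I_N -> 'rV[R]_d).
Hypothesis WZ : feasible W Z.

Let sum_others i : \sum_(j < k | j != y i) dotv (W j) (Z i) = - dotv (W (y i)) (Z i).
Proof. by case: WZ => _ [_ W0]; apply: sum_dotv_others. Qed.

Let label_dotv_le1 i : dotv (W (y i)) (Z i) <= 1.
Proof. by case: WZ => W1 [Z1 _]; apply: sphere_dotv_le1. Qed.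

Let sample_bound_le i :
  sample_bound k s (a1 i) (a2 i) (b1 i) (b2 i) <=
  sample_loss (y i) s (a1 i) (a2 i) (b1 i) (b2 i)
    (dotv (W (y i)) (Z i)) (fun j => dotv (W j) (Z i)).
Proof. exact: sample_bound_le_loss. Qed.

Lemma GM_bound_le_loss : GM_bound k s a1 a2 b1 b2 <= GM_loss s a1 a2 b1 b2 y W Z.
Proof.
by rewrite ler_wpM2l ?invr_ge0 ?ler0n //; apply: ler_sum => i _; apply: sample_bound_le.
Qed.

Hypothesis y_onto : forall c, exists i, y i = c.

Lemma GM_loss_eq_bound : GM_loss s a1 a2 b1 b2 y W Z = GM_bound k s a1 a2 b1 b2 <->
  simplex_gram W /\ forall i, Z i = W (y i).
Proof.
have [W1 [Z1 _]] := WZ.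
split=> [|[W_gram ZW]].
  have N_gt0 : (0 < N)%N.
    by have [i _] := y_onto (Ordinal (ltnW k_ge2)); apply: leq_trans (ltn_ord i).
  move=> /(mulfI (lt0r_neq0 _)); rewrite invr_gt0 ltr0n => /(_ N_gt0) /eqP.
  rewrite -subr_eq0 -sumrB psumr_eq0 => [/allP tight|i _]; last first.
    by rewrite subr_ge0; apply: sample_bound_le.
  have sample_eq i := sample_loss_eq_bound (b1 := b1 i) (b2 := b2 i) k_ge2 s_gt0
    (a1_ge i) (a2_le i) (label_dotv_le1 i) (sum_others i).
  have {}sample_eq i := sample_eq i (subr0_eq (eqP (tight i (mem_index_enum i)))).
  have ZW i : Z i = W (y i).
    by apply/esym/sphere_dotv_eq1 => //; case: (sample_eq i).
  split=> // c c'; have [i <-] := y_onto c'.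
  by rewrite -ZW; apply: (sample_eq i).2.
rewrite /GM_loss /GM_bound; congr (_ * _); apply: eq_bigr => i _.
rewrite ZW (W1 (y i)).
by apply: sample_loss_simplex => // j; apply: W_gram.
Qed.

End EmpiricalRisk.

Section Simplex.
Variables (R : realType) (d n : nat) (e : 'I_n -> 'rV[R]_d).
Hypotheses (n_gt0 : (0 < n)%N) (e_orthonormal : forall i j, dotv (e i) (e j) = (i == j)%:R).

Let one := \sum_i e i.

Let dotv_e_one i : dotv (e i) one = 1.
Proof.
rewrite /one dotv_sumr (bigD1 i) //= big1 => [|j ji]; first by rewrite e_orthonormal eqxx addr0.
by rewrite e_orthonormal eq_sym (negbTE ji).
Qed.

Let dotv_one_e i : dotv one (e i) = 1.
Proof. by rewrite dotvC dotv_e_one. Qed.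

Let dotv_one_one : dotv one one = n%:R.
Proof.
rewrite {1}/one dotv_suml (eq_bigr (fun=> 1)) => [|i _]; last by rewrite dotv_e_one.
by rewrite sumr_const card_ord.
Qed.

Local Notation q := (Num.sqrt (n.+1%:R : R)).

Let q2 : q ^+ 2 = n%:R + 1.
Proof. by rewrite sqr_sqrtr ?ler0n // natr1. Qed.

Let n_neq0 : n%:R != 0 :> R.
Proof. by rewrite pnatr_eq0 -lt0n. Qed.

(* An unnormalized regular simplex in the span of [e]: squared norms [n] and mutual
   inner products [-1], since [q ^+ 2 * (j == j') + (1 - q ^+ 2) / n] is [n] or [-1]. *)
Definition simplex_vertex (i : 'I_n.+1) : 'rV[R]_d :=
  if unlift ord_max i is Some j then q *: e j + ((1 - q) / n%:R) *: one else - one.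

Lemma simplex_vertex_gram i i' :
  dotv (simplex_vertex i) (simplex_vertex i') = if i == i' then n%:R else -1.
Proof.
rewrite /simplex_vertex.
case: (unliftP ord_max i) => [j ->|->]; case: (unliftP ord_max i') => [j' ->|->];
  rewrite ?eqxx ?(inj_eq lift_inj) ?lift_eqF ?eq_liftF ?dotvNl ?dotvNr;
  rewrite ?(dotvDl, dotvDr, dotvZl, dotvZr) ?dotv_one_one ?dotv_e_one ?dotv_one_e ?e_orthonormal.
- case: (j == j') => /=.
    transitivity (q ^+ 2 + (1 - q ^+ 2) / n%:R); first by field.
    by rewrite q2; field.
  transitivity ((1 - q ^+ 2) / n%:R); first by field.
  by rewrite q2; field.
- by field.
- by field.
- by rewrite opprK.
Qed.

End Simplex.

Lemma dotv_delta (R : realType) (d : nat) (a b : 'I_d) :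
  dotv (delta_mx 0 a) (delta_mx 0 b) = (a == b)%:R :> R.
Proof.
rewrite /dotv (bigD1 a) //= big1 => [|t ta]; first by rewrite !mxE !eqxx mul1r addr0 eq_sym.
by rewrite !mxE (negbTE ta) mul0r.
Qed.

Lemma simplex_exists (R : realType) (d k : nat) : (2 <= k)%N -> (k <= d.+1)%N ->
  exists W : 'I_k -> 'rV[R]_d, (forall j, on_sphere (W j)) /\ simplex_gram W.
Proof.
case: k => [//|n] n_gt0; rewrite ltnS => n_le_d.
pose e (j : 'I_n) : 'rV[R]_d := delta_mx 0 (widen_ord n_le_d j).
have e_orthonormal i j : dotv (e i) (e j) = (i == j)%:R by rewrite dotv_delta.
pose W i := (Num.sqrt (n%:R : R))^-1 *: simplex_vertex e i.
have W_gram i i' : dotv (W i) (W i') = if i == i' then 1 else - (n%:R)^-1.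
  rewrite dotvZl dotvZr simplex_vertex_gram // mulrA -expr2 exprVn sqr_sqrtr ?ler0n //.
  by case: eqP => _; rewrite ?mulrN1 ?mulVf // pnatr_eq0 -lt0n.
exists W; split=> [j|i i' ii']; first by rewrite /on_sphere W_gram eqxx.
by rewrite W_gram (negbTE ii').
Qed.

Lemma simplex_gram_sum_eq0 (R : realType) (d k : nat) (W : 'I_k -> 'rV[R]_d) :
  (2 <= k)%N -> (forall j, on_sphere (W j)) -> simplex_gram W -> \sum_j W j = 0.
Proof.
move=> k_ge2 W1 W_gram; apply: dotvv_eq0; rewrite dotv_sum_self big1 // => i _.
rewrite W1 (eq_bigr (fun=> - ((k.-1)%:R)^-1)) => [|j ji]; last exact: W_gram.
rewrite sumr_const cardC1 card_ord -[_ *+ _]mulr_natl mulrN mulfV ?subrr //.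
by rewrite pnatr_eq0 -lt0n -ltnS prednK // ltnW.
Qed.

Section FiniteImage.
Variables (R : realType) (T : finType) (A : set T) (f : T -> R).

Lemma has_ubound_fin_image : has_ubound (f @` A).
Proof.
exists (\sum_t `|f t|) => _ [t _ <-].
by rewrite (bigD1 t) //= (le_trans (ler_norm _)) // lerDl sumr_ge0.
Qed.

Lemma has_lbound_fin_image : has_lbound (f @` A).
Proof.
exists (- \sum_t `|f t|) => _ [t _ <-].
by rewrite lerNl (bigD1 t) //= (le_trans (ler_norm (- f t))) // normrN lerDl sumr_ge0.
Qed.

End FiniteImage.

Lemma image_const (T U : Type) (A : set T) (f : T -> U) (c : U) :
  A !=set0 -> (forall t, A t -> f t = c) -> f @` A = [set c].
Proof.
move=> [t0 At0] fc; apply/seteqP; split=> [_ [t At <-]|_ ->]; first exact: fc.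
by exists t0 => //; apply: fc.
Qed.

Lemma ler_acos (R : realType) (x y : R) : -1 <= x -> x <= y -> y <= 1 -> acos y <= acos x.
Proof.
move=> x_ge y_ge y_le; rewrite leNgt; apply/negP => acos_lt.
have x_in : -1 <= x <= 1 by rewrite x_ge /=; lra.
have y_in : -1 <= y <= 1 by rewrite y_le andbT; lra.
have := @ltr_cos R (acos x) (acos y).
rewrite !in_itv /= !acos_ge0 ?acos_lepi // => /(_ isT isT).
by rewrite acos_lt !acosK ?in_itv //=; lra.
Qed.

Section Margins.
Variables (R : realType) (d k N : nat) (y : 'I_N -> 'I_k).
Variables (W : 'I_k -> 'rV[R]_d) (Z : 'I_N -> 'rV[R]_d).
Hypotheses (k_ge2 : (2 <= k)%N) (W1 : forall j, on_sphere (W j)).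

Local Notation n := ((k.-1)%:R : R).

Let n_ge1 : 1 <= n.
Proof. exact: natr_pred_ge1. Qed.

Let n_gt0 : 0 < n.
Proof. exact: lt_le_trans ltr01 n_ge1. Qed.

Let k_eq : k%:R = n + 1 :> R.
Proof. by rewrite natr1 prednK // ltnW. Qed.

Let exists_other (c : 'I_k) : exists j, j != c.
Proof.
have [c0|c0] := eqVneq c (Ordinal (ltnW k_ge2)).
  by exists (Ordinal k_ge2); rewrite c0 -val_eqE.
by exists (Ordinal (ltnW k_ge2)); rewrite eq_sym.
Qed.

Let distinct_pairs_neq0 : [set p : 'I_k * 'I_k | p.1 != p.2] !=set0.
Proof.
by have [j jk] := exists_other (Ordinal (ltnW k_ge2)); exists (j, Ordinal (ltnW k_ge2)).
Qed.

Lemma class_margin_le : class_margin W <= acos (- n^-1).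
Proof.
(* [0 <= |sum_j W j|^2 <= k (1 + n M)] with [M] the largest off-diagonal entry. *)
rewrite /class_margin; set M := sup _.
have M_ub i j : j != i -> dotv (W j) (W i) <= M.
  by move=> ji; apply: ub_le_sup; [apply: has_ubound_fin_image | exists (j, i)].
have M_le1 : M <= 1.
  apply: ge_sup => [|_ [p _ <-]]; first exact: image_nonempty.
  exact: sphere_dotv_le1.
have M_ge : - n^-1 <= M.
  have : 0 <= (1 + n * M) *+ k.
    apply: le_trans (dotvv_ge0 (\sum_j W j)) _.
    rewrite dotv_sum_self -[k in _ *+ k]card_ord -sumr_const.
    apply: ler_sum => i _; rewrite W1 lerD2l.
    apply: le_trans (ler_sum _ (fun j => M_ub i j)) _.
    by rewrite sumr_const cardC1 card_ord -[_ *+ _]mulr_natl.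
  rewrite pmulrn_lge0 => [M_lb|]; last exact: ltnW.
  rewrite -(ler_pM2l n_gt0) mulrN mulfV ?gt_eqF //.
  by rewrite -subr_ge0 opprK addrC.
by apply: ler_acos => //; rewrite lerN2 invf_le1.
Qed.

Lemma class_margin_simplex : simplex_gram W -> class_margin W = acos (- n^-1).
Proof.
move=> W_gram; rewrite /class_margin (image_const (c := - n^-1)) ?sup1 // => p; exact: W_gram.
Qed.

Lemma sample_margin_simplex i : simplex_gram W -> Z i = W (y i) ->
  sample_margin y W Z i = k%:R / n.
Proof.
move=> W_gram Zi; rewrite /sample_margin Zi W1 (image_const (c := - n^-1)) ?sup1.
- by rewrite k_eq; field; rewrite gt_eqF.
- by have [j ji] := exists_other (y i); exists j.
- by move=> j; apply: W_gram.
Qed.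

Hypothesis y_onto : forall c, exists i, y i = c.

Lemma min_sample_margin_simplex : simplex_gram W -> (forall i, Z i = W (y i)) ->
  min_sample_margin y W Z = k%:R / n.
Proof.
move=> W_gram ZW; rewrite /min_sample_margin (image_const (c := k%:R / n)) ?inf1 //.
  by have [i _] := y_onto (Ordinal (ltnW k_ge2)); exists i.
by move=> i _; apply: sample_margin_simplex.
Qed.

Hypothesis Z1 : forall i, on_sphere (Z i).

Lemma sample_margin_le_centered i :
  n * sample_margin y W Z i <= dotv (k%:R *: W (y i) - \sum_j W j) (Z i).
Proof.
rewrite /sample_margin; set g := sup _.
have g_ub j : j != y i -> dotv (W j) (Z i) <= g.
  by move=> ji; apply: ub_le_sup; [apply: has_ubound_fin_image | exists j].
have others_le : \sum_(j | j != y i) dotv (W j) (Z i) <= n * g.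
  apply: le_trans (ler_sum _ g_ub) _.
  by rewrite sumr_const cardC1 card_ord -[_ *+ _]mulr_natl.
rewrite dotvBl dotvZl dotv_suml (bigD1 (y i)) //= k_eq.
by clearbody g; lra.
Qed.

Lemma min_sample_margin_le : min_sample_margin y W Z <= k%:R / n.
Proof.
(* Use [2 k <v, z> <= |v|^2 + k^2] for [v = k w_c - sum_j w_j] and one sample [z] per
   class [c], then sum over [c]: the [|v|^2] add up to [k^3 - k |sum_j w_j|^2]. *)
have [f yf] := choice y_onto.
have k_gt0 : 0 < k%:R :> R by rewrite ltr0n ltnW.
have centered_le c : 2 * k%:R * (n * min_sample_margin y W Z) <=
    dotv (k%:R *: W c - \sum_j W j) (k%:R *: W c - \sum_j W j) + k%:R ^+ 2.
  have := sample_margin_le_centered (f c); rewrite yf => margin_le.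
  have := mulr2_dotv_le (k%:R *: W c - \sum_j W j) (k%:R *: Z (f c)).
  rewrite !dotvZr dotvZl (Z1 (f c)) mulr1 -expr2 => /(le_trans _); apply.
  rewrite -mulrA !ler_pM2l //; apply: le_trans margin_le.
  by rewrite ler_pM2l //; apply: ge_inf; [apply: has_lbound_fin_image | exists (f c)].
have : \sum_(c < k) 2 * k%:R * (n * min_sample_margin y W Z) <=
    \sum_(c < k) (dotv (k%:R *: W c - \sum_j W j) (k%:R *: W c - \sum_j W j) + k%:R ^+ 2).
  by apply: ler_sum => c _; apply: centered_le.
have norms : \sum_(c < k) dotv (W c) (W c) = k%:R.
  by rewrite (eq_bigr (fun=> 1)) => [|c _]; [rewrite sumr_const card_ord | apply: W1].
rewrite big_split /= sum_dotv_centered norms !sumr_const card_ord.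
rewrite -[_ ^+ 2 *+ k]mulr_natr -[(2 * _ * _) *+ k]mulr_natr => total.
have := dotvv_ge0 (\sum_j W j); have : 0 < k%:R ^+ 2 :> R by rewrite exprn_gt0.
rewrite ler_pdivlMr //; nra.
Qed.

End Margins.

Lemma GM_minimizer_eq_bound (R : realType) (d k N : nat) (y : 'I_N -> 'I_k)
    (s : R) (a1 a2 b1 b2 : 'I_N -> R) (W : 'I_k -> 'rV[R]_d) (Z : 'I_N -> 'rV[R]_d) :
  (2 <= k)%N -> (k <= d.+1)%N -> 0 < s ->
  (forall i, 1 / 2 <= a1 i) -> (forall i, a2 i <= a1 i) -> (forall c, exists i, y i = c) ->
  feasible W Z ->
  (forall (W' : 'I_k -> 'rV[R]_d) (Z' : 'I_N -> 'rV[R]_d), feasible W' Z' ->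
     GM_loss s a1 a2 b1 b2 y W Z <= GM_loss s a1 a2 b1 b2 y W' Z') ->
  GM_loss s a1 a2 b1 b2 y W Z = GM_bound k s a1 a2 b1 b2.
Proof.
move=> k_ge2 k_le s_gt0 a1_ge a2_le y_onto WZ W_min.
have [W0 [W01 W0_gram]] := simplex_exists R k_ge2 k_le.
have W0Z0 : feasible W0 (fun i => W0 (y i)).
  by split=> //; split=> [i|]; [apply: W01 | apply: simplex_gram_sum_eq0].
apply/le_anti; rewrite GM_bound_le_loss // andbT.
have [_ simplex_attains] := GM_loss_eq_bound b1 b2 k_ge2 s_gt0 a1_ge a2_le W0Z0 y_onto.
by rewrite -simplex_attains //; apply: W_min.
Qed.

Theorem theorem5 (R : realType) (d k N : nat)
  (hd : (2 <= d)%N) (hk2 : (2 <= k)%N) (hkd : (k <= d.+1)%N)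
  (y : 'I_N -> 'I_k) (hy : forall c : 'I_k, exists i : 'I_N, y i = c)
  (s : R) (hs : 0 < s) (a1 a2 b1 b2 : 'I_N -> R)
  (ha1 : forall i, 1 / 2 <= a1 i) (ha2 : forall i, a2 i <= a1 i) :
  (* lower bound and equality characterization *)
  (forall (W : 'I_k -> 'rV[R]_d) (Z : 'I_N -> 'rV[R]_d), feasible W Z ->
     GM_bound k s a1 a2 b1 b2 <= GM_loss s a1 a2 b1 b2 y W Z /\
     (GM_loss s a1 a2 b1 b2 y W Z = GM_bound k s a1 a2 b1 b2 <->
        (forall i j : 'I_k, i != j -> dotv (W i) (W j) = - ((k.-1)%:R)^-1) /\
        (forall i : 'I_N, Z i = W (y i)))) /\
  (* minimizers of the constrained problem have these margins *)
  (forall (W : 'I_k -> 'rV[R]_d) (Z : 'I_N -> 'rV[R]_d), feasible W Z ->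
     (forall (W' : 'I_k -> 'rV[R]_d) (Z' : 'I_N -> 'rV[R]_d), feasible W' Z' ->
        GM_loss s a1 a2 b1 b2 y W Z <= GM_loss s a1 a2 b1 b2 y W' Z') ->
     class_margin W = acos (- ((k.-1)%:R)^-1) /\
     min_sample_margin y W Z = k%:R / (k.-1)%:R) /\
  (* ... and these are the largest possible values over all unit configurations *)
  (forall (W : 'I_k -> 'rV[R]_d) (Z : 'I_N -> 'rV[R]_d),
     (forall j, on_sphere (W j)) -> (forall i, on_sphere (Z i)) ->
     class_margin W <= acos (- ((k.-1)%:R)^-1) /\
     min_sample_margin y W Z <= k%:R / (k.-1)%:R).
Proof.
split; [|split].
- move=> W Z WZ; split; first exact: GM_bound_le_loss.
  exact: GM_loss_eq_bound.
- move=> W Z WZ W_min.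
  have [W_gram ZW] := (GM_loss_eq_bound b1 b2 hk2 hs ha1 ha2 WZ hy).1
    (GM_minimizer_eq_bound hk2 hkd hs ha1 ha2 hy WZ W_min).
  have [W1 _] := WZ.
  by split; [apply: class_margin_simplex | apply: min_sample_margin_simplex].
- move=> W Z W1 Z1; split; first exact: class_margin_le.
  exact: min_sample_margin_le.
Qed.
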